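(* Let $n$ be a positive integer and let $\lambda$ and $\mu$ be integer partitions of $n$. Then $\mathrm{pre}_2(\lambda) = \mathrm{pre}_2(\mu)$ if and only if $\lambda = \mu$.
   Context: An integer partition $\lambda = (\lambda_1, \dots, \lambda_\ell)$ of a positive integer $n$ is a weakly decreasing finite sequence of positive integers whose sum is $n$; the $\lambda_i$ are its parts and $\ell(\lambda)=\ell$ is its length. For a partition $\lambda = (\lambda_1,\dots,\lambda_\ell)$, $\mathrm{pre}_2(\lambda)$ denotes the partition whose multiset of parts is the multiset $\{\!\{\lambda_i\lambda_j : 1 \le i < j \le \ell\}\!\}$ (with multiplicities, arranged in weakly decreasing order); if $\ell < 2$ it is the empty partition. *)

From mathcomp Require Import all_boot.
Set Implicit Arguments. Unset Strict Implicit. Unset Printing Implicit Defensive.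

Definition is_partition (n : nat) (l : seq nat) : bool :=
  [&& sorted geq l, all (fun x => 0 < x) l & sumn l == n].

Definition pre2 (l : seq nat) : seq nat :=
  sort geq [seq nth 0 l ij.1 * nth 0 l ij.2 |
             ij <- [seq (i, j) | i <- iota 0 (size l), j <- iota 0 (size l)]
           & ij.1 < ij.2].

(* Let p_k(l) be the sum of the k-th powers of the parts of l.  Expanding the
   square of a sum gives p_k(l)^2 = p_(2k)(l) + 2 p_k(pre_2 l), so pre_2 l
   together with p_1(l) = n determines p_k(l) for every power of two k.  These
   power sums determine a multiset of positive integers: the largest element A
   of lam ++ mu lies in both lists, for otherwise one side is at most
   size * (A - 1)^k and the other at least A^k, which is larger for big k.
   Removing A from both lists and recursing shows that lam and mu are
   permutations of each other, hence equal, both being sorted. *)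

From mathcomp Require Import all_boot.
From mathcomp Require Import zify.

Set Implicit Arguments.
Unset Strict Implicit.
Unset Printing Implicit Defensive.

Definition powsum (k : nat) (l : seq nat) : nat := \sum_(x <- l) x ^ k.

Lemma powsum1 (l : seq nat) : powsum 1 l = sumn l.
Proof. by rewrite /powsum sumnE; apply: eq_bigr => x _; rewrite expn1. Qed.

Lemma powsum_rem (k x : nat) (l : seq nat) :
  x \in l -> powsum k l = x ^ k + powsum k (rem x l).
Proof.
by move=> lx; rewrite /powsum (perm_big _ (perm_to_rem lx)) big_cons.
Qed.

Lemma powsum_le (k A : nat) (l : seq nat) :
  all (fun x => x <= A) l -> powsum k l <= size l * A ^ k.
Proof.
rewrite /powsum; elim: l => [|a l IH] /=; first by rewrite big_nil.
case/andP=> le_aA le_lA; rewrite big_cons mulSn leq_add ?IH //.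
by case: (posnP k) => [->|k_gt0]; rewrite ?expn0 ?leq_exp2r.
Qed.

Lemma sqrn_sum (y : nat -> nat) (n : nat) :
  (\sum_(0 <= i < n) y i) ^ 2 = \sum_(0 <= i < n) y i ^ 2
    + 2 * \sum_(0 <= i < n) \sum_(0 <= j < n) (if i < j then y i * y j else 0).
Proof.
elim: n => [|n IH]; first by rewrite !big_geq.
under [X in 2 * X]eq_bigr => i _ do rewrite big_nat_recr //=.
rewrite big_split /= !big_nat_recr //= ltnn.
have -> : \sum_(0 <= j < n) (if n < j then y n * y j else 0) = 0.
  rewrite big1_seq // => j; rewrite mem_index_iota => /andP[_ /ltnW].
  by rewrite ltnNge => ->.
have -> : \sum_(0 <= i < n) (if i < n then y i * y n else 0)
          = (\sum_(0 <= i < n) y i) * y n.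
  by rewrite big_distrl; apply: eq_big_nat => i /andP[_ ->].
move: IH; rewrite sqrnD; nia.
Qed.

Lemma powsum_nth (k : nat) (l : seq nat) :
  powsum k l = \sum_(0 <= i < size l) nth 0 l i ^ k.
Proof. by rewrite /powsum (big_nth 0). Qed.

Lemma powsum_pre2_nth (k : nat) (l : seq nat) :
  powsum k (pre2 l) = \sum_(0 <= i < size l) \sum_(0 <= j < size l)
    (if i < j then nth 0 l i ^ k * nth 0 l j ^ k else 0).
Proof.
rewrite /powsum /pre2 (perm_big _ (permEl (perm_sort geq _))).
rewrite big_map big_filter big_mkcond big_allpairs /index_iota subn0.
by apply: eq_bigr => i _; apply: eq_bigr => j _; rewrite expnMn.
Qed.

Lemma powsum_pre2 (k : nat) (l : seq nat) :
  powsum k l ^ 2 = powsum (2 * k) l + 2 * powsum k (pre2 l).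
Proof.
rewrite powsum_pre2_nth !powsum_nth sqrn_sum; congr (_ + _).
by apply: eq_bigr => i _; rewrite mulnC expnM.
Qed.

Lemma pre2_powsum_pow2 (lam mu : seq nat) :
  pre2 lam = pre2 mu -> sumn lam = sumn mu ->
  forall j, powsum (2 ^ j) lam = powsum (2 ^ j) mu.
Proof.
move=> eq_pre2 eq_sum; elim=> [|j IH]; first by rewrite expn0 !powsum1.
have := powsum_pre2 (2 ^ j) lam.
by rewrite eq_pre2 IH powsum_pre2 -expnS => /addIn ->.
Qed.

Lemma bernoulli_expn (x s : nat) : x ^ s.+1 + s.+1 * x ^ s <= x.+1 ^ s.+1.
Proof.
elim: s => [|s IH]; first by rewrite !expn1 expn0 addn1.
rewrite [leqRHS]expnS; apply: leq_trans (leq_mul (leqnn x.+1) IH).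
rewrite !expnS; nia.
Qed.

Lemma ltn_mul_expn (m x s : nat) : m * x < s -> m * x ^ s < x.+1 ^ s.
Proof.
case: s => [|t]; first by rewrite ltn0.
case: x => [|x] lt_mx_t; first by rewrite exp0n // muln0 expn_gt0.
apply: leq_trans (bernoulli_expn x.+1 t); rewrite expnS mulnA.
by apply: leq_trans (leq_addl _ _); rewrite ltn_pmul2r ?expn_gt0.
Qed.

Lemma bigmax_mem (s : seq nat) : s != [::] -> \max_(x <- s) x \in s.
Proof.
elim: s => // a s IH _; rewrite big_cons inE.
have [->|/IH max_s] := eqVneq s [::]; first by rewrite big_nil maxn0 eqxx.
by rewrite /maxn; case: ltnP => _; rewrite ?max_s ?orbT ?eqxx.
Qed.

Lemma mem_powsum_max (lam mu : seq nat) (A : nat) :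
  all (fun x => 0 < x) mu ->
  (forall j, powsum (2 ^ j) lam = powsum (2 ^ j) mu) ->
  A \in mu -> all (fun x => x <= A) lam -> A \in lam.
Proof.
move=> pos_mu eq_powsum muA le_lam_A; apply/negPn/negP => lamA.
have [x defA] : exists x, A = x.+1.
  by exists A.-1; rewrite prednK // (allP pos_mu).
have le_lam_x : all (fun y => y <= x) lam.
  apply/allP => y lamy; rewrite -ltnS -defA ltn_neqAle (allP le_lam_A) // andbT.
  by apply: contraNneq lamA => <-.
pose j := size lam * x.
have lt_j_pow : j < 2 ^ j by apply: ltn_expl.
have := leq_ltn_trans (powsum_le (2 ^ j) le_lam_x) (ltn_mul_expn lt_j_pow).
by rewrite eq_powsum (powsum_rem _ muA) defA ltnNge leq_addr.
Qed.

Lemma perm_powsum_pow2 (lam mu : seq nat) :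
  all (fun x => 0 < x) lam -> all (fun x => 0 < x) mu ->
  (forall j, powsum (2 ^ j) lam = powsum (2 ^ j) mu) -> perm_eq lam mu.
Proof.
have [N] := ubnP (size (lam ++ mu)); elim: N lam mu => // N IH lam mu.
move=> lt_size pos_lam pos_mu eq_powsum.
have [|nil_lam_mu] := eqVneq (lam ++ mu) [::].
  by case: lam mu {lt_size pos_lam pos_mu eq_powsum} => [|? ?] [|? ?].
set A := \max_(x <- lam ++ mu) x.
have le_A (l : seq nat) : {subset l <= lam ++ mu} -> all (fun x => x <= A) l.
  by move=> sub_l; apply/allP => x /sub_l lx; exact: (leq_bigmax_seq x lx).
have lamA : A \in lam.
  have := bigmax_mem nil_lam_mu; rewrite -/A mem_cat => /orP[//|muA].
  apply: (mem_powsum_max pos_mu eq_powsum muA).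
  by apply: le_A => x lx; rewrite mem_cat lx.
have muA : A \in mu.
  apply: (@mem_powsum_max mu lam _ pos_lam) => [j|//|].
    by rewrite eq_powsum.
  by apply: le_A => x mx; rewrite mem_cat mx orbT.
apply: perm_trans (perm_to_rem lamA) _; rewrite perm_sym.
apply: perm_trans (perm_to_rem muA) _; rewrite perm_cons perm_sym.
apply: IH.
- move: lt_size; rewrite !size_cat (perm_size (perm_to_rem lamA)).
  by rewrite (perm_size (perm_to_rem muA)) /= addSn addnS ltnS => /ltnW.
- by apply/allP => x /mem_rem; exact: (allP pos_lam).
- by apply/allP => x /mem_rem; exact: (allP pos_mu).
- by move=> j; apply/(@addnI (A ^ 2 ^ j)); rewrite -!powsum_rem.
Qed.

Theorem theorem1 (n : nat) (lam mu : seq nat) :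
  0 < n -> is_partition n lam -> is_partition n mu ->
  (pre2 lam = pre2 mu <-> lam = mu).
Proof.
move=> _ /and3P[sorted_lam pos_lam /eqP sum_lam].
move=> /and3P[sorted_mu pos_mu /eqP sum_mu].
split=> [eq_pre2|-> //].
have eq_powsum := pre2_powsum_pow2 eq_pre2 (etrans sum_lam (esym sum_mu)).
apply: (sorted_eq (leT := geq)) => //.
- exact: (rev_trans leq_trans).
- by move=> m n' /andP[le_nm le_mn]; apply/anti_leq/andP.
- exact: perm_powsum_pow2.
Qed.
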